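(* Let $k$ be a positive integer. Then: (i) for all positive divisors $l$ and $d$ of $k$, $$c(k,l,d)=c(k/d,\,k/l);$$ (ii) for every positive divisor $d$ of $k$, $$\beta_{k,d}(t)=k\,t^k\,M(1/t;\,k/d,\,k)-1;$$ (iii) for every integer $n$, $$M(t;n,k)=Z_{R(C_k)}^{\chi_n}(t,t,\dots,t).$$
   Context: Let $\epsilon_k:=e^{2\pi i/k}$ and let $(a,b)$ denote the greatest common divisor. The Ramanujan sum is $c(n,k):=\sum_{1\le m\le k,\ (m,k)=1}\epsilon_k^{mn}$ for an integer $n$ and a positive integer $k$. The $n$-necklace polynomial is $M(t;n,k):=\frac1k\sum_{d\mid k}c(n,k/d)\,t^d$. For divisors $l,d$ of $k$, set $c(k,l,d):=\sum_{1\le m\le k,\ (m,k)=l}\epsilon_d^{m}$. The Harer–Zagier polynomial is $\beta_{k,d}(t):=\sum_{r=1}^{k-1}\epsilon_d^{r}\,t^{k-(k,r)}$ for $d\mid k$ (equivalently $\sum_{l\mid k,\ l<k}c(k,l,d)t^{k-l}$). For a permutation group $H$ on a set of $v$ elements and a character $\chi$ of $H$, the generalized Redfield–Pólya cycle index is $Z_H^\chi(t_1,\dots,t_v):=\frac{1}{|H|}\sum_{h\in H}\chi(h)\prod_{j=1}^v t_j^{c_j(h)}$, where $c_j(h)$ is the number of cycles of length $j$ of $h$. For a finite group $G$, $R(G)$ denotes its image under the (left) regular representation, a permutation group on the set $G$. $C_k$ is the cyclic group of order $k$, and $\chi_n$ is the irreducible character of $C_k$ whose value on a fixed generator is $\epsilon_k^n$.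 *)

From mathcomp Require Import all_boot all_algebra all_fingroup.
From mathcomp Require Import reals trigo complex.
Set Implicit Arguments. Unset Strict Implicit. Unset Printing Implicit Defensive.
Import GRing.Theory Num.Theory.
Local Open Scope ring_scope.
Local Open Scope complex_scope.

Section Defs.
Variable R : realType.
Local Notation C := R[i].

Definition eps (k : nat) : C := cos (2 * pi / k%:R) +i* sin (2 * pi / k%:R).

Definition ramanujan (n : int) (k : nat) : C :=
  \sum_(1 <= m < k.+1 | coprime m k) eps k ^ (m%:Z * n).

Definition necklace (t : C) (n : int) (k : nat) : C :=
  k%:R^-1 * \sum_(d <- divisors k) ramanujan n (k %/ d) * t ^+ d.

Definition cgen (k l d : nat) : C :=
  \sum_(1 <= m < k.+1 | gcdn m k == l) eps d ^+ m.

Definition beta (k d : nat) (t : C) : C :=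
  \sum_(1 <= r < k) eps d ^+ r * t ^+ (k - gcdn k r).

Definition ncycles (T : finType) (s : {perm T}) (j : nat) : nat :=
  #|[set X in porbits s | #|X| == j]|.

(* generalized Redfield-Polya cycle index Z_H^chi(t_1,...,t_v), v = #|T|,
   the variables being given as a function tv : nat -> C (tv j = t_j) *)
Definition cycle_index (T : finType) (H : {set {perm T}}) (chi : {perm T} -> C)
    (tv : nat -> C) : C :=
  #|H|%:R^-1 * \sum_(h in H) chi h * \prod_(1 <= j < #|T|.+1) tv j ^+ ncycles h j.

End Defs.

Definition lreg (gT : finGroupType) (x : gT) : {perm gT} := perm (mulgI x).

(* R(G) for G the whole group gT: the image of the left regular representation *)
Definition regular_perm_group (gT : finGroupType) : {set {perm gT}} :=
  [set lreg x | x : gT].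

Definition glog (gT : finGroupType) (g h : gT) : nat :=
  find (fun j => (g ^+ j)%g == h) (iota 0 #[g]%g).

(* chi_n on C_k = <[g]> (g the fixed generator, #[g] = k): chi_n(g^j) = eps_k^{n j} *)
Definition chi_cyc (R : realType) (gT : finGroupType) (g : gT) (n : int) (h : gT)
    : R[i] := eps R #[g]%g ^ (n * (glog g h)%:Z).

(** Write [eps_d ^ m = e2pi (m / d)] with [e2pi x = exp (2 pi i x)], which has
    period 1, and group the indices [1 <= m <= k] by [e = gcd(m, k)]: then
    [m = e m'] with [m'] coprime to [k / e], and [e2pi (e m' / d)] is
    [eps_(k/e) ^ (m' k / d)]; this is (i). Grouping the sum defining [beta_(k,d)]
    in the same way and applying (i) produces the Ramanujan sums of the necklace
    polynomial at [1/t], which is (ii). For (iii), the cycles of left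
    multiplication by [x] are the right cosets of [<[x]>], so [x] contributes
    [chi_n(x) t ^ (k / #[x])] to the cycle index; for [x = g ^ i] one has
    [k / #[x] = gcd(i, k)], and grouping by this gcd once more gives the
    necklace polynomial. *)

From mathcomp Require Import all_boot all_algebra all_fingroup.
From mathcomp Require Import reals trigo complex.
From mathcomp Require Import cyclic.
From mathcomp.algebra_tactics Require Import ring.
From mathcomp Require Import zify.
Set Implicit Arguments. Unset Strict Implicit. Unset Printing Implicit Defensive.
Import GRing.Theory Num.Theory.
Local Open Scope ring_scope.
Local Open Scope complex_scope.

Section GcdSums.
Variable V : nmodType.

Lemma sum_gcd_eq_mul (K e : nat) (F : nat -> V) : (0 < e)%N ->
  \sum_(1 <= m < (e * K).+1 | gcdn m (e * K) == e) F m =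
  \sum_(1 <= m < K.+1 | coprime m K) F (e * m)%N.
Proof.
move=> e_gt0; rewrite -big_filter -[RHS]big_filter -(big_map (muln e) xpredT F).
apply/perm_big/uniq_perm.
- exact/filter_uniq/iota_uniq.
- rewrite map_inj_uniq; first exact/filter_uniq/iota_uniq.
  by move=> a b /eqP; rewrite eqn_pmul2l // => /eqP.
move=> x; rewrite mem_filter mem_index_iota; apply/andP/mapP.
- case=> /eqP gcd_xeK x_le.
  have /dvdnP[m def_x] : (e %| x)%N by rewrite -gcd_xeK dvdn_gcdl.
  move: gcd_xeK x_le; rewrite def_x mulnC -muln_gcdr => gcd_mK x_le.
  exists m => //; rewrite mem_filter mem_index_iota.
  by rewrite /coprime -(eqn_pmul2l e_gt0) gcd_mK muln1 /=; nia.
- case=> m; rewrite mem_filter mem_index_iota => /andP[/eqP cop_mK m_le] ->.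
  by rewrite -muln_gcdr cop_mK muln1 eqxx; split=> //; nia.
Qed.

Lemma sum_by_gcd (k : nat) (G : nat -> nat -> V) : (0 < k)%N ->
  \sum_(1 <= m < k.+1) G m (gcdn m k) =
  \sum_(e <- divisors k) \sum_(1 <= m < k.+1 | gcdn m k == e) G m e.
Proof.
move=> k_gt0; under [RHS]eq_bigr do rewrite big_mkcond.
rewrite exchange_big /=; apply: eq_bigr => m _.
rewrite -big_mkcond -big_filter (eq_filter (a2 := pred1 (gcdn m k))); last first.
  by move=> e; rewrite /= eq_sym.
by rewrite filter_pred1_uniq ?divisors_uniq ?big_seq1 // -dvdn_divisors ?dvdn_gcdr.
Qed.

Lemma sum_nat1_periodic (k : nat) (F : nat -> V) : F k = F 0%N ->
  \sum_(1 <= m < k.+1) F m = \sum_(m < k) F m.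
Proof.
case: k => [|k] Fk; first by rewrite big_geq // big_ord0.
by rewrite -(big_mkord xpredT) big_nat_recr //= [in RHS]big_ltn // Fk addrC.
Qed.

End GcdSums.

Section RootsOfUnity.
Variable R : realType.

Definition e2pi (x : R) : R[i] := cos (2 * pi * x) +i* sin (2 * pi * x).

Lemma e2piD x y : e2pi (x + y) = e2pi x * e2pi y.
Proof. by rewrite /e2pi mulrDr cosD sinD /=; congr (_ +i* _); ring. Qed.

Lemma e2pi0 : e2pi 0 = 1.
Proof. by rewrite /e2pi mulr0 cos0 sin0. Qed.

Lemma e2piN x : e2pi (- x) = (e2pi x)^-1.
Proof. by apply/esym/mulr1_eq; rewrite -e2piD addrN e2pi0. Qed.

Lemma e2pi_nat (n : nat) : e2pi n%:R = 1.
Proof.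
elim: n => [|n IH]; first exact: e2pi0.
by rewrite -addn1 natrD e2piD IH mul1r /e2pi mulr1 mulr_natl cos2pi sin2pi.
Qed.

Lemma e2pi_int (z : int) : e2pi z%:~R = 1.
Proof.
case: z => n; first by rewrite -pmulrn e2pi_nat.
by rewrite NegzE mulrNz e2piN -pmulrn e2pi_nat invr1.
Qed.

Lemma eps_expn (d m : nat) : eps R d ^+ m = e2pi (m%:R / d%:R).
Proof.
elim: m => [|m IH]; first by rewrite mul0r e2pi0.
by rewrite exprS IH -e2piD -addn1 natrD mulrDl mul1r addrC.
Qed.

Lemma eps_expz (d : nat) (z : int) : eps R d ^ z = e2pi (z%:~R / d%:R).
Proof.
case: z => n; first by rewrite -pmulrn -eps_expn.
by rewrite NegzE mulrNz -pmulrn mulNr e2piN -eps_expn.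
Qed.

Lemma cgen_ramanujan (k l d : nat) : (0 < k)%N -> (l %| k)%N -> (d %| k)%N ->
  cgen R k l d = ramanujan R (k %/ d)%N%:Z (k %/ l)%N.
Proof.
move=> k_gt0 l_dvd d_dvd; have l_gt0 := dvdn_gt0 k_gt0 l_dvd.
have d_gt0 := dvdn_gt0 k_gt0 d_dvd.
case/dvdnP: l_dvd => K def_k; rewrite {1}def_k mulnC.
have K_gt0 : (0 < K)%N by move: k_gt0; rewrite def_k muln_gt0 => /andP[].
rewrite /cgen /ramanujan sum_gcd_eq_mul // def_k mulnK //; apply: eq_bigr => m _.
rewrite eps_expn eps_expz -PoszM -pmulrn !natrM -def_k natf_div // def_k natrM.
have [KR dR] : K%:R != 0 :> R /\ d%:R != 0 :> R by split; rewrite pnatr_eq0 -lt0n.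
by congr e2pi; field; rewrite KR dR.
Qed.

Lemma beta_necklace (k d : nat) (t : R[i]) : (0 < k)%N -> (d %| k)%N -> t != 0 ->
  beta k d t = k%:R * t ^+ k * necklace t^-1 (k %/ d)%N%:Z k - 1.
Proof.
move=> k_gt0 d_dvd t_neq0; have d_gt0 := dvdn_gt0 k_gt0 d_dvd.
have kR : k%:R != 0 :> R[i] by rewrite pnatr_eq0 -lt0n.
apply: (addIr 1); rewrite subrK.
have -> : beta k d t + 1 = \sum_(1 <= m < k.+1) eps R d ^+ m * t ^+ (k - gcdn m k).
  rewrite big_nat_recr //= gcdnn subnn expr0 mulr1 eps_expn -natf_div // e2pi_nat.
  by congr (_ + 1); apply: eq_bigr => m _; rewrite gcdnC.
rewrite (sum_by_gcd (fun m e => eps R d ^+ m * t ^+ (k - e))) //.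
rewrite /necklace -mulrA mulrCA mulVKf // big_distrr /=.
apply: eq_big_seq => e; rewrite -dvdn_divisors // => e_dvd.
rewrite -cgen_ramanujan // mulrCA /cgen big_distrl /=.
suff -> : t ^+ k * t^-1 ^+ e = t ^+ (k - e) by [].
by rewrite -{1}(subnK (dvdn_leq k_gt0 e_dvd)) exprD exprVn mulfK // expf_neq0.
Qed.

Lemma necklace_sum_gcd (k : nat) (n : int) (t : R[i]) : (0 < k)%N ->
  necklace t n k = k%:R^-1 * \sum_(i < k) eps R k ^ (n * i%:Z) * t ^+ gcdn i k.
Proof.
move=> k_gt0; congr (_ * _).
rewrite -(sum_nat1_periodic (F := fun m => eps R k ^ (n * m%:Z) * t ^+ gcdn m k));
  last first.
  rewrite gcdnn gcd0n mulr0 expr0z eps_expz intrM -pmulrn mulfK ?e2pi_int //.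
  by rewrite pnatr_eq0 -lt0n.
rewrite (sum_by_gcd (fun m e => eps R k ^ (n * m%:Z) * t ^+ e)) //.
apply: eq_big_seq => e; rewrite -dvdn_divisors // => /dvdnP[q def_k].
have [q_gt0 e_gt0] : (0 < q)%N /\ (0 < e)%N.
  by apply/andP; rewrite -muln_gt0 -def_k.
rewrite /ramanujan def_k mulnK // mulnC sum_gcd_eq_mul // big_distrl /=.
apply: eq_bigr => m _; rewrite !eps_expz !intrM -!pmulrn !natrM.
have [eR qR] : e%:R != 0 :> R /\ q%:R != 0 :> R by split; rewrite pnatr_eq0 -lt0n.
by congr (e2pi _ * _); field; rewrite eR qR.
Qed.

End RootsOfUnity.

Section RegularRepresentation.
Variable gT : finGroupType.
Implicit Types x y : gT.

Lemma lreg1 x : lreg x 1%g = x.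
Proof. by rewrite permE /= mulg1. Qed.

Lemma lreg_inj : injective (@lreg gT).
Proof. by move=> x y eq_xy; rewrite -(lreg1 x) eq_xy lreg1. Qed.

Lemma lregX x i y : (lreg x ^+ i)%g y = (x ^+ i * y)%g.
Proof.
elim: i y => [|i IH] y; first by rewrite !expg0 perm1 mul1g.
by rewrite expgS permM IH permE /= expgSr mulgA.
Qed.

Lemma porbit_lreg x y : porbit (lreg x) y = (<[x]> :* y)%g.
Proof.
apply/setP => z; rewrite mem_rcoset [@porbit]unlock; apply/imsetP/idP.
- by case=> _ /cycleP[i ->] ->; rewrite /aperm lregX mulgK mem_cycle.
- case/cycleP=> i def_z; exists (lreg x ^+ i)%g; first exact: mem_cycle.
  by rewrite /aperm lregX -def_z mulgKV.
Qed.

Lemma porbits_lreg x : porbits (lreg x) = rcosets <[x]> [set: gT].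
Proof.
by apply/setP => X; apply/imsetP/imsetP => -[y _ ->]; exists y;
  rewrite ?inE // porbit_lreg rcosetE.
Qed.

Lemma ncycles_lreg x j :
  ncycles (lreg x) j = if j == #[x]%g then (#|gT| %/ #[x]%g)%N else 0%N.
Proof.
have size_cycle X : X \in porbits (lreg x) -> #|X| = #[x]%g.
  by rewrite porbits_lreg => /imsetP[y _ ->]; rewrite rcosetE card_rcoset.
rewrite /ncycles; case: eqP => [->|ne_j].
  rewrite (eq_card (B := porbits (lreg x))); last first.
    by move=> X; rewrite inE andb_idr // => /size_cycle ->.
  by rewrite porbits_lreg -cardsT -(Lagrange (subsetT <[x]>%G)) mulKn.
apply/eqP; rewrite cards_eq0; apply/eqP/setP => X; rewrite !inE.
by apply/negbTE/negP => /andP[/size_cycle -> /eqP/esym/ne_j].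
Qed.

Lemma cycle_index_regular (R : realType) (chi : gT -> R[i]) (t : R[i]) :
  cycle_index (regular_perm_group gT) (fun p => chi (p 1%g)) (fun _ => t) =
  #|gT|%:R^-1 * \sum_x chi x * t ^+ (#|gT| %/ #[x]%g)%N.
Proof.
rewrite /cycle_index card_imset; last exact: lreg_inj.
rewrite big_imset /=; last by move=> x y _ _ /lreg_inj.
congr (_ * _); apply: eq_bigr => x _; rewrite lreg1; congr (_ * _).
under eq_bigr do rewrite ncycles_lreg.
rewrite prodrXr -big_mkcond -big_filter (eq_filter (a2 := pred1 #[x]%g)) //.
rewrite filter_pred1_uniq ?iota_uniq ?big_seq1 // mem_index_iota ltnS order_gt0 /=.
exact: max_card.
Qed.

Lemma sum_generated_cycle (V : nmodType) (g : gT) (F : gT -> V) :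
  <[g]>%g = [set: gT] -> \sum_x F x = \sum_(i < #[g]%g) F (g ^+ i)%g.
Proof.
move=> gen_g; rewrite (eq_bigl (mem <[g]>%g)); last by move=> x /=; rewrite gen_g inE.
have -> : <[g]>%g = [set (g ^+ i)%g | i : 'I_#[g]%g].
  apply/setP => x; apply/idP/imsetP => [|[i _ ->]]; last exact: mem_cycle.
  by case/cyclePmin => i lt_i ->; exists (Ordinal lt_i).
rewrite big_imset // => i j _ _ /eqP.
by rewrite eq_expg_mod_order !modn_small // => /eqP /val_inj.
Qed.

Lemma glogX (g : gT) i : (i < #[g]%g)%N -> glog g (g ^+ i)%g = i.
Proof.
move=> lt_i; rewrite /glog (eq_in_find (a2 := pred1 i)).
  have := nth_iota 0 0 lt_i; rewrite add0n => nth_i.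
  by rewrite -/(index i _) -{1}nth_i index_uniq ?size_iota ?iota_uniq.
move=> j; rewrite mem_iota add0n => /andP[_ lt_j] /=.
by rewrite eq_expg_mod_order !modn_small.
Qed.

End RegularRepresentation.

Theorem proposition1 (R : realType) (k : nat) (hk : (0 < k)%N) :
  (* (i) *)
  (forall l d : nat, (l %| k)%N -> (d %| k)%N ->
     cgen R k l d = ramanujan R (k %/ d)%N%:Z (k %/ l)%N) /\
  (* (ii) *)
  (forall d : nat, (d %| k)%N -> forall t : R[i], t != 0 ->
     beta k d t = k%:R * t ^+ k * necklace t^-1 (k %/ d)%N%:Z k - 1) /\
  (* (iii) C_k realized as any finite group gT generated by an element g of order k *)
  (forall (gT : finGroupType) (g : gT), <[g]>%g = [set: gT] -> #[g]%g = k ->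
   forall (n : int) (t : R[i]),
     necklace t n k =
     cycle_index (regular_perm_group gT)
       (fun p : {perm gT} => chi_cyc R g n (p 1%g)) (fun _ => t)).
Proof.
split; first by move=> l d; apply: cgen_ramanujan.
split; first by move=> d d_dvd t; apply: beta_necklace.
move=> gT g gen_g ord_g n t.
have card_gT : #|gT| = k by rewrite -ord_g -cardsT -gen_g.
rewrite cycle_index_regular card_gT necklace_sum_gcd // (sum_generated_cycle _ gen_g).
rewrite ord_g; congr (_ * _); apply: eq_bigr => i _.
rewrite /chi_cyc glogX ?ord_g // orderXgcd ord_g divnA ?dvdn_gcdl //.
by rewrite mulKn // gcdnC.
Qed.
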